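(* Let $X$ be a strongly $0$-dimensional $\sigma$-compact metrizable space. Then $\mathrm{SR}(X)$ is a $G_\delta$ subset of $(\mathrm{Met}(X),\mathcal{D}_X)$.
   Context: $\mathrm{Met}(X)$ denotes the set of all metrics on $X$ generating the topology of $X$, equipped with the supremum metric $\mathcal{D}_X(d,e)=\sup_{x,y\in X}|d(x,y)-e(x,y)|$ (values in $[0,\infty]$) and the topology generated by its open balls. A topological space is strongly $0$-dimensional if for every pair $A,B$ of disjoint closed subsets there is a clopen set $V$ with $A\subseteq V$, $V\cap B=\emptyset$. A metric $d$ is strongly rigid if $d(x,y)=d(u,v)\neq0$ implies $\{x,y\}=\{u,v\}$; $\mathrm{SR}(X)$ is the set of strongly rigid metrics in $\mathrm{Met}(X)$. A $G_\delta$ set is a countable intersection of open sets. *)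

From HB Require Import structures.
From mathcomp Require Import all_boot all_order all_algebra.
From mathcomp Require Import all_classical all_reals all_analysis.
From mathcomp Require Import Rstruct Rstruct_topology.
Unset Strict Implicit. Unset Printing Implicit Defensive.
Import Order.TTheory GRing.Theory Num.Theory.
Local Open Scope classical_set_scope.
Local Open Scope ring_scope.

Notation RR := Rdefinitions.R.

Definition is_metric {X : Type} (d : X -> X -> RR) : Prop :=
  [/\ (forall x y, 0 <= d x y),
      (forall x y, d x y = 0 <-> x = y),
      (forall x y, d x y = d y x) &
      (forall x y z, d x z <= d x y + d y z)].

Definition generates_topology {X : topologicalType} (d : X -> X -> RR) : Prop :=
  forall A : set X, open A <->
    (forall x, A x -> exists2 e : RR, 0 < e & [set y | d x y < e] `<=` A).

Definition Met (X : topologicalType) : set (X -> X -> RR) :=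
  [set d | is_metric d /\ generates_topology d].


Definition metrizable (X : topologicalType) : Prop := exists d, Met X d.

Definition DX {X : Type} (d e : X -> X -> RR) : \bar RR :=
  ereal_sup [set (`|d xy.1 xy.2 - e xy.1 xy.2|)%:E | xy in [set: X * X]].

(* open sets of (Met(X), D_X) in the topology generated by the open balls
   {e in Met X | D_X(d,e) < r}: U is open iff each point of U has a ball
   around it contained in U. *)
Definition Met_open (X : topologicalType) (U : set (X -> X -> RR)) : Prop :=
  U `<=` Met X /\
  forall d, U d -> exists2 r : RR, 0 < r &
    [set e | Met X e /\ (DX d e < r%:E)%E] `<=` U.

Definition Met_Gdelta (X : topologicalType) (S : set (X -> X -> RR)) : Prop :=
  exists U : nat -> set (X -> X -> RR),
    (forall n, Met_open X (U n)) /\ S = \bigcap_n U n.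

Definition strongly_rigid {X : Type} (d : X -> X -> RR) : Prop :=
  forall x y u v, d x y = d u v -> d x y <> 0 ->
    (x = u /\ y = v) \/ (x = v /\ y = u).

Definition SR (X : topologicalType) : set (X -> X -> RR) :=
  [set d | Met X d /\ strongly_rigid d].


Definition strongly_zero_dimensional (X : topologicalType) : Prop :=
  forall A B : set X, closed A -> closed B -> A `&` B = set0 ->
    exists V : set X, [/\ clopen V, A `<=` V & V `&` B = set0].

Definition sigma_compact (X : topologicalType) : Prop :=
  exists K : nat -> set X, (forall n, compact (K n)) /\ \bigcup_n K n = setT.

From HB Require Import structures.
From mathcomp Require Import all_boot all_order all_algebra.
From mathcomp Require Import all_classical all_reals all_analysis.
From mathcomp Require Import Rstruct Rstruct_topology.
From mathcomp Require Import lra.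
Import Order.TTheory GRing.Theory Num.Theory.
Local Open Scope classical_set_scope.
Local Open Scope ring_scope.

(* A metric fails to be strongly rigid exactly when, for some c > 0, four
   points x, y, u, v satisfy d(x,y) = d(u,v) >= c while the pairs {x,y} and
   {u,v} are c-apart under both matchings.  Fix c = 1/(n+1) and let the four
   points range over the n-th set of a compact exhaustion of X.  Absence of
   such a configuration is measured by a gap function which is continuous in
   the points, so it is bounded below by some eps > 0 on the compact set of
   quadruples; a sup-distance perturbation of d by less than eps/2 changes the
   gap by less than eps.  Hence these metrics form countably many D_X-open
   sets, whose intersection is SR(X). *)

Section MetricContinuity.
Context {X : topologicalType} {d : X -> X -> RR} (Md : Met X d).

Lemma Met_ball_nbhs x (e : RR) : 0 < e -> nbhs x [set y | d x y < e].
Proof.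
case: Md => -[_ d0 _ dtri] gen e_gt0.
apply: open_nbhs_nbhs; split; last by rewrite /= (proj2 (d0 x x)).
apply/gen => y /= dxy; exists (e - d x y); first by rewrite subr_gt0.
by move=> z /= dyz; have := dtri x y z; lra.
Qed.

Lemma Met_dist_sub a b a' b' : `|d a b - d a' b'| <= d a a' + d b b'.
Proof.
case: Md => -[_ _ dsym dtri] _.
have := dtri a a' b; have := dtri a' b' b; have := dtri a' a b'.
have := dtri a b b'; have := dsym a a'; have := dsym b b'.
by rewrite ler_norml; move=> *; apply/andP; split; lra.
Qed.

Lemma continuous_Met_comp (Y : topologicalType) (f g : Y -> X) :
  continuous f -> continuous g -> continuous (fun q => d (f q) (g q)).
Proof.
move=> fc gc q; apply/(@cvgrPdist_lt RR RR^o) => eps eps_gt0.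
have eps2_gt0 : 0 < eps / 2 by rewrite divr_gt0.
have nf := fc q _ (Met_ball_nbhs (f q) _ eps2_gt0).
have ng := gc q _ (Met_ball_nbhs (g q) _ eps2_gt0).
near=> t.
have dft : d (f q) (f t) < eps / 2 by near: t.
have dgt : d (g q) (g t) < eps / 2 by near: t.
by apply: le_lt_trans (Met_dist_sub _ _ _ _) _; lra.
Unshelve. all: end_near.
Qed.

End MetricContinuity.

Section Coincidences.
Context {X : Type}.
Implicit Types (d e : X -> X -> RR) (c s : RR) (p : (X * X) * (X * X)).

Definition separated_coincidence d c p : Prop :=
  [/\ d p.1.1 p.1.2 = d p.2.1 p.2.2, c <= d p.1.1 p.1.2,
      c <= Num.max (d p.1.1 p.2.1) (d p.1.2 p.2.2) &
      c <= Num.max (d p.1.1 p.2.2) (d p.1.2 p.2.1)].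

(* Nonpositive exactly on separated coincidences. *)
Definition coincidence_gap d c p : RR :=
  Num.max (Num.max `|d p.1.1 p.1.2 - d p.2.1 p.2.2| (c - d p.1.1 p.1.2))
    (Num.max (c - Num.max (d p.1.1 p.2.1) (d p.1.2 p.2.2))
             (c - Num.max (d p.1.1 p.2.2) (d p.1.2 p.2.1))).

Lemma coincidence_gap_gt0 d c p :
  ~ separated_coincidence d c p -> 0 < coincidence_gap d c p.
Proof.
move=> nsc; rewrite ltNge; apply/negP; rewrite !ge_max normr_le0 subr_eq0.
by case/andP=> /andP[/eqP ? ?] /andP[? ?]; apply: nsc; split; rewrite // -subr_le0.
Qed.

Lemma coincidence_gap_lt {d e c s p} :
    (forall x y, `|d x y - e x y| < s) -> separated_coincidence e c p ->
  coincidence_gap d c p < s *+ 2.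
Proof.
move=> de [E1 E2 E3 E4].
have {de} de x y : e x y - s < d x y /\ d x y < e x y + s.
  by have := de x y; rewrite ltr_distl => /andP.
have max_lt (a b a' b' : RR) :
    a' - s < a -> b' - s < b -> Num.max a' b' - s < Num.max a b.
  move=> ? ?; have : a <= Num.max a b /\ b <= Num.max a b by rewrite !le_max !lexx orbT.
  by case: (leP a' b') => _; lra.
have [a1 a2] := de p.1.1 p.1.2; have [b1 b2] := de p.2.1 p.2.2.
have [u1 _] := de p.1.1 p.2.1; have [v1 _] := de p.1.2 p.2.2.
have [w1 _] := de p.1.1 p.2.2; have [z1 _] := de p.1.2 p.2.1.
have := max_lt _ _ _ _ u1 v1; have := max_lt _ _ _ _ w1 z1.
rewrite /coincidence_gap !gt_max mulr2n => ? ?.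
apply/andP; split; apply/andP; split; try lra.
by rewrite ltr_norml; apply/andP; split; lra.
Qed.

Lemma separated_coincidence_le d c c' p :
  c' <= c -> separated_coincidence d c p -> separated_coincidence d c' p.
Proof. by move=> c'c [? ? ? ?]; split=> //; apply: le_trans c'c _. Qed.

Lemma is_metric_max_gt0 {d x y u v} :
  is_metric d -> ~ (x = u /\ y = v) -> 0 < Num.max (d x u) (d y v).
Proof.
case=> d_ge0 d0 _ _ neq; rewrite lt_max !lt_def !d_ge0 !andbT; apply/orP.
have [/d0 xu|] := eqVneq (d x u) 0; last by left.
by right; apply/eqP => /d0 yv; apply: neq.
Qed.

Lemma strongly_rigid_no_separated_coincidence d c p :
  is_metric d -> strongly_rigid d -> 0 < c -> ~ separated_coincidence d c p.
Proof.
case: p => -[x y] [u v] [_ d0 _ _] rig c_gt0 [/= E1 E2 E3 E4].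
have dxy_neq0 : d x y <> 0 by apply/eqP; rewrite gt_eqF // (lt_le_trans c_gt0).
have dzz z : d z z = 0 by apply/d0.
by case: (rig x y u v E1 dxy_neq0) => -[? ?]; subst; [move: E3|move: E4];
  rewrite !dzz maxxx; apply/negP; rewrite -ltNge.
Qed.

(* The witness level c is the least of d(x,y) and the two matching distances. *)
Lemma not_strongly_rigid_separated_coincidence {d} :
    is_metric d -> ~ strongly_rigid d ->
  exists2 c, 0 < c & exists p, separated_coincidence d c p.
Proof.
move=> dm /existsNP[x] /existsNP[y] /existsNP[u] /existsNP[v].
move=> /not_implyP[E] /not_implyP[dxy_neq0] /not_orP[neq1 neq2].
have dxy_gt0 : 0 < d x y.
  by rewrite lt_def; case: dm => d_ge0 *; rewrite d_ge0 andbT; exact/eqP.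
have m1 := is_metric_max_gt0 dm neq1.
have m2 : 0 < Num.max (d x v) (d y u).
  by rewrite maxC; apply: is_metric_max_gt0 => // -[? ?]; apply: neq2.
exists (Num.min (d x y) (Num.min (Num.max (d x u) (d y v)) (Num.max (d x v) (d y u)))).
  by rewrite !lt_min dxy_gt0 m1 m2.
by exists ((x, y), (u, v)); split=> //=; rewrite !ge_min lexx ?orbT.
Qed.

End Coincidences.

Section CoincidenceFree.
Context {X : topologicalType}.
Implicit Types (d e : X -> X -> RR) (c : RR) (A : set ((X * X) * (X * X))%type).

Lemma continuous_coincidence_gap {d} c :
  Met X d -> continuous (coincidence_gap d c).
Proof.
move=> Md; pose Q := ((X * X) * (X * X))%type.
have pr11 : continuous (fun p : Q => p.1.1) by move=> ?; exact: cvg_comp cvg_fst cvg_fst.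
have pr12 : continuous (fun p : Q => p.1.2) by move=> ?; exact: cvg_comp cvg_fst cvg_snd.
have pr21 : continuous (fun p : Q => p.2.1) by move=> ?; exact: cvg_comp cvg_snd cvg_fst.
have pr22 : continuous (fun p : Q => p.2.2) by move=> ?; exact: cvg_comp cvg_snd cvg_snd.
have dc := continuous_Met_comp Md.
move=> p; apply: (@continuous_max _ _ (fun=> _) (fun=> _));
  apply: (@continuous_max _ _ (fun=> _) (fun=> _)).
- apply: (@cvg_norm _ RR^o).
  by apply: cvgB; [exact: dc pr11 pr12 p|exact: dc pr21 pr22 p].
- by apply: (@cvgB _ RR^o); [exact: cvg_cst|exact: dc pr11 pr12 p].
- apply: (@cvgB _ RR^o); first exact: cvg_cst.
  apply: (@continuous_max _ _ (fun=> _) (fun=> _)).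
  + exact: dc pr11 pr21 p.
  + exact: dc pr12 pr22 p.
- apply: (@cvgB _ RR^o); first exact: cvg_cst.
  apply: (@continuous_max _ _ (fun=> _) (fun=> _)).
  + exact: dc pr11 pr22 p.
  + exact: dc pr12 pr21 p.
Qed.

Lemma compact_coincidence_gap_ge {d c A} :
    Met X d -> compact A -> (forall p, A p -> ~ separated_coincidence d c p) ->
  exists2 eps : RR, 0 < eps & forall p, A p -> eps <= coincidence_gap d c p.
Proof.
move=> Md cA nsc; have [->|/set0P A0] := eqVneq A set0; first by exists 1.
have [q /set_mem Aq qmin] := compact_EVT_min A0 cA
  (continuous_subspaceT (continuous_coincidence_gap c Md)).
exists (coincidence_gap d c q); first exact/coincidence_gap_gt0/nsc.
by move=> p Ap; apply: qmin; rewrite inE.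
Qed.

Definition coincidence_free A c : set (X -> X -> RR) :=
  [set d | Met X d /\ forall p, A p -> ~ separated_coincidence d c p].

Lemma Met_open_coincidence_free A c : compact A -> Met_open X (coincidence_free A c).
Proof.
move=> cA; split=> [d []//|d [Md nsc]].
have [eps eps_gt0 gap_ge] := compact_coincidence_gap_ge Md cA nsc.
exists (eps / 2); first by rewrite divr_gt0.
move=> e [Me De]; split=> // p Ap sce.
have de x y : `|d x y - e x y| < eps / 2.
  rewrite -lte_fin; apply: le_lt_trans De.
  by apply: ereal_sup_ubound; exists (x, y).
by have := coincidence_gap_lt de sce; have := gap_ge p Ap; lra.
Qed.

End CoincidenceFree.

Lemma bigcup_ord_near (T : Type) (K : nat -> set T) z :
  (\bigcup_n K n) z -> \forall n \near \oo, (\bigcup_(i < n.+1) K i) z.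
Proof. by case=> i _ Kz; exists i => // n /= ni; exists i. Qed.

Theorem proposition5p3 (X : topologicalType) :
  strongly_zero_dimensional X -> sigma_compact X -> metrizable X ->
  Met_Gdelta X (SR X).
Proof.
move=> _ [K [cK KX]] _.
pose L n := \bigcup_(i < n.+1) K i.
pose A n := (L n `*` L n) `*` (L n `*` L n).
have cA n : compact (A n).
  have cL : compact (L n) by rewrite /L bigcup_mkord; exact: bigsetU_compact.
  by apply: compact_setX; apply: compact_setX.
exists (fun n => coincidence_free (A n) n.+1%:R^-1); split.
  by move=> n; exact: Met_open_coincidence_free.
apply/seteqP; split=> [d [Md rig] n _|d dU].
  split=> // p _; apply: strongly_rigid_no_separated_coincidence => //.
  by case: Md.
have Md : Met X d by case: (dU 0%N I).
split=> //; apply: contrapT => /(not_strongly_rigid_separated_coincidence (proj1 Md)).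
move=> [c c_gt0 [p scp]].
have Lz z : \forall n \near \oo, L n z by apply: bigcup_ord_near; rewrite KX.
have [n [Anp cn]] : exists n, A n p /\ n.+1%:R^-1 < c.
  apply: (@filter_ex _ \oo); near=> n; split.
  - by split; split; near: n; apply: Lz.
  - by near: n; exact: (near_infty_natSinv_lt (PosNum c_gt0)).
by have [_] := dU n I; apply; last exact: separated_coincidence_le (ltW cn) scp.
Unshelve. all: end_near.
Qed.
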